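(* Let $\ell,d,e$ be nonnegative integers with $e\ge d+m(q-1)$ and $\ell\le m$. Suppose $\mu\in\overline{\mathbb{M}}_d\cap\mathbb{F}_q[x_0,\dots,x_\ell]$ and $\nu\in\overline{\mathbb{M}}^{(\ell)}_e$. Then $\mu\mid\nu$ if and only if $\sigma^{(\ell)}(\mu)\mid\sigma^{(\ell)}(\nu)$.
   Context: $q$ is a prime power, $m$ a positive integer. A monomial $\mu\neq1$ in $x_0,\dots,x_m$ written $x_0^{a_0}\cdots x_k^{a_k}$ with $a_k>0$ is projectively reduced if $a_0,\dots,a_{k-1}\le q-1$; $1$ is projectively reduced. $\overline{\mathbb{M}}$ is the set of projectively reduced monomials and $\overline{\mathbb{M}}_e$ those of degree $e$. $\overline{\mathbb{M}}^{(0)}=\{x_0^a:a\ge0\}$ and for $1\le\ell\le m$, $\overline{\mathbb{M}}^{(\ell)}=\{x_0^{a_0}\cdots x_\ell^{a_\ell}\in\overline{\mathbb{M}}:a_\ell>0\}$; $\overline{\mathbb{M}}^{(\ell)}_e=\overline{\mathbb{M}}^{(\ell)}\cap\overline{\mathbb{M}}_e$. The specialization map $\sigma^{(\ell)}:\overline{\mathbb{M}}\to\overline{\mathbb{M}}\cup\{0\}$ sends $x_0^{a_0}\cdots x_{\ell-1}^{a_{\ell-1}}x_\ell^{a_\ell}$ to $x_0^{a_0}\cdots x_{\ell-1}^{a_{\ell-1}}$ and sends monomials not in $\mathbb{F}_q[x_0,\dots,x_\ell]$ to $0$ (empty products equal $1$). *)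

From mathcomp Require Import all_boot.
Set Implicit Arguments. Unset Strict Implicit. Unset Printing Implicit Defensive.

(* A monomial x_0^{a_0} ... x_m^{a_m} in the variables x_0,...,x_m is
   represented by its exponent vector a : 'I_(m.+1) -> nat. *)
Definition monomial (m : nat) := {ffun 'I_m.+1 -> nat}.

Definition mdeg (m : nat) (a : monomial m) : nat := \sum_(i < m.+1) a i.

Definition mdiv (m : nat) (a b : monomial m) : Prop := forall i, a i <= b i.

Definition in_vars (m l : nat) (a : monomial m) : Prop :=
  forall i : 'I_m.+1, l < i -> a i = 0.

Definition proj_reduced (q m : nat) (a : monomial m) : Prop :=
  (forall i, a i = 0) \/
  exists k : 'I_m.+1, [/\ 0 < a k, in_vars k a &
                         forall j : 'I_m.+1, j < k -> a j <= q - 1].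

Definition PRdeg (q m e : nat) (a : monomial m) : Prop :=
  proj_reduced q a /\ mdeg a = e.

Definition PRlevel (q m l : nat) (a : monomial m) : Prop :=
  if l is 0 then in_vars 0 a
  else [/\ proj_reduced q a, in_vars l a & exists i : 'I_m.+1, (i : nat) = l /\ 0 < a i].

(* specialization map sigma^(l); None stands for the zero polynomial *)
Definition sigma (m l : nat) (a : monomial m) : option (monomial m) :=
  if [forall i : 'I_m.+1, (l < i) ==> (a i == 0)]
  then Some [ffun i : 'I_m.+1 => if (i : nat) == l then 0 else a i]
  else None.

Definition odiv (m : nat) (a b : option (monomial m)) : Prop :=
  match a, b with
  | _, None => True
  | None, Some _ => False
  | Some a, Some b => mdiv a b
  end.

Definition prime_power (q : nat) : Prop := exists p k, prime p /\ 0 < k /\ q = p ^ k.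

From mathcomp Require Import all_boot.
Set Implicit Arguments. Unset Strict Implicit. Unset Printing Implicit Defensive.

(* Off the variable x_l, both sides are the same comparison of exponents.  At
   x_l itself, every other exponent of nu is at most q - 1, so its degree e
   forces nu_l >= e - m(q - 1) >= d >= mu_l. *)

Definition kill_var (m l : nat) (a : monomial m) : monomial m :=
  [ffun i : 'I_m.+1 => if (i : nat) == l then 0 else a i].

Lemma sigma_in_vars (m l : nat) (a : monomial m) :
  in_vars l a -> sigma l a = Some (kill_var l a).
Proof.
move=> a_l; rewrite /sigma; case: forallP => // -[i].
by apply/implyP => /a_l ->.
Qed.

Lemma mdiv_kill_var (m l : nat) (a b : monomial m) :
  mdiv (kill_var l a) (kill_var l b) <-> forall i : 'I_m.+1, (i : nat) != l -> a i <= b i.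
Proof.
split=> [ab i il | ab i]; first by have := ab i; rewrite !ffunE (negbTE il).
by rewrite !ffunE; case: eqP => // /eqP; apply: ab.
Qed.

Lemma exponent_le_mdeg (m : nat) (a : monomial m) (i : 'I_m.+1) : a i <= mdeg a.
Proof. by rewrite /mdeg (bigD1 i) //= leq_addr. Qed.

Lemma mdeg_le_exponent_add (m c : nat) (a : monomial m) (i : 'I_m.+1) :
  (forall j, j != i -> a j <= c) -> mdeg a <= a i + m * c.
Proof.
move=> a_c; rewrite /mdeg (bigD1 i) //= leq_add2l.
apply: leq_trans (_ : \sum_(j < m.+1 | j != i) c <= _); first exact: leq_sum.
by rewrite sum_nat_const cardC1 card_ord.
Qed.

Lemma PRlevel_in_vars (q m l : nat) (a : monomial m) : PRlevel q l a -> in_vars l a.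
Proof. by case: l => [|l] //= []. Qed.

Lemma PRlevel_exponent_le (q m l : nat) (a : monomial m) (i : 'I_m.+1) :
  PRlevel q l a -> (i : nat) != l -> a i <= q - 1.
Proof.
case: l => [a_0 i0 | l [[a0 | [k [a_k a_kv a_lt]]] a_l [j [jl a_j]]] il].
- by rewrite a_0 // lt0n.
- by rewrite a0 in a_j.
have lk : l < k.
  by rewrite ltnNge; apply: contraL a_j => kl; rewrite a_kv ?jl.
case: (ltngtP i l.+1) => [ilt | igt | ieq]; last by rewrite ieq eqxx in il.
- exact/a_lt/(leq_trans ilt).
- by rewrite a_l.
Qed.

Theorem proposition4p1 (q m l d e : nat) (mu nu : monomial m) :
  prime_power q -> 0 < m ->
  d + m * (q - 1) <= e -> l <= m ->
  PRdeg q d mu -> in_vars l mu ->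
  PRlevel q l nu -> mdeg nu = e ->
  (mdiv mu nu <-> odiv (sigma l mu) (sigma l nu)).
Proof.
move=> _ _ de _ [_ deg_mu] mu_l nu_lev deg_nu.
rewrite (sigma_in_vars mu_l) (sigma_in_vars (PRlevel_in_vars nu_lev)) /=.
apply: iff_trans (iff_sym (mdiv_kill_var l mu nu)).
split=> [mu_nu i _ | mu_nu i]; first exact: mu_nu.
have [il | il] := eqVneq (i : nat) l; last exact: mu_nu.
have nu_deg : e <= nu i + m * (q - 1).
  rewrite -deg_nu; apply: mdeg_le_exponent_add => j ji.
  by apply: PRlevel_exponent_le nu_lev _; rewrite -il; apply: contra ji => /eqP/val_inj ->.
rewrite -(leq_add2r (m * (q - 1))); apply: leq_trans (leq_trans de nu_deg).
by rewrite leq_add2r -deg_mu exponent_le_mdeg.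
Qed.
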